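(* Let $M$ be a finitary matroid on $E$, $B$ a base of $M$, $n\ge 0$ an integer, $e_0,\dots,e_n\in E\setminus B$ pairwise distinct, and $F\subseteq B$ with $|F|\le n$. Then there exist $i^*\le n$ and a circuit $C$ of $M$ with \[e_{i^*}\in C\subseteq\bigcup_{i^*\le i\le n}C_M(e_i,B)\setminus F.\]
   Context: $C_M(e,B)$ denotes the fundamental circuit of $e\notin B$ on the base $B$, i.e. the unique circuit of $M$ contained in $B\cup\{e\}$. *)

From mathcomp Require Import all_boot.
From mathcomp Require Import classical_sets.
Set Implicit Arguments. Unset Strict Implicit. Unset Printing Implicit Defensive.
Local Open Scope classical_set_scope.

(* Finite subsets are represented by duplicate-free lists. *)
Definition sset (T : eqType) (s : seq T) : set T := [set x | x \in s].

Definition finitary_matroid (T : eqType) (E : set T) (indep : set T -> Prop) : Prop :=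
  [/\ (forall I, indep I -> I `<=` E),
      indep set0,
      (forall I J, indep J -> I `<=` J -> indep I),
      (forall s t : seq T, uniq s -> uniq t ->
          indep (sset s) -> indep (sset t) -> size s < size t ->
          exists2 x, x \in t & x \notin s /\ indep (x |` sset s)) &
      (forall X, (forall s : seq T, sset s `<=` X -> indep (sset s)) -> indep X)].

Definition is_base (T : eqType) (indep : set T -> Prop) (B : set T) : Prop :=
  indep B /\ (forall X, indep X -> B `<=` X -> X = B).

Definition is_circuit (T : eqType) (E : set T) (indep : set T -> Prop) (C : set T) : Prop :=
  [/\ C `<=` E, ~ indep C & (forall D, D `<=` C -> D <> C -> indep D)].

(* C is the fundamental circuit C_M(e,B): a circuit contained in B ∪ {e}
   (which is unique when B is a base and e ∉ B). *)
Definition is_fund_circuit (T : eqType) (E : set T) (indep : set T -> Prop)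
  (B : set T) (e : T) (C : set T) : Prop :=
  is_circuit E indep C /\ C `<=` e |` B.

(* For f in F, apply the induction hypothesis to e_1, ..., e_n
   and F - f. If some resulting circuit avoids f, it proves the claim with
   i* >= 1. Otherwise each f in F lies in a circuit inside f together with
   elements of the C(e_i,B) outside F + e_0 (e_0 is not in B, so it lies in no
   other fundamental circuit). A basis of those elements then spans F, hence
   C(e_0,B) - e_0, and the circuit it forms with e_0 proves the claim with
   i* = 0. *)

From mathcomp Require Import all_boot.
From mathcomp Require Import classical_sets boolp zify.
Set Implicit Arguments. Unset Strict Implicit. Unset Printing Implicit Defensive.
Local Open Scope classical_set_scope.

Lemma sset_nil (T : eqType) : sset (@nil T) = set0.
Proof. by apply/seteqP; split. Qed.

Lemma sset_cons (T : eqType) (x : T) (s : seq T) : sset (x :: s) = x |` sset s.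
Proof.
apply/seteqP; split=> y; rewrite /sset /= in_cons.
  by case/orP=> [/eqP|]; [left|right].
by case=> [->|->]; rewrite ?eqxx ?orbT.
Qed.

Lemma sset_bigcup (T : eqType) (A : nat -> set T) (n : nat) :
  (forall i, i <= n -> exists s, A i = sset s) ->
  exists s : seq T, forall y, y \in s <-> exists2 i, i <= n & A i y.
Proof.
elim: n => [|n IH] finA.
  have [s eq_s] := finA 0 (leqnn 0); exists s => y; split.
    by exists 0; rewrite ?eq_s.
  by case=> i; rewrite leqn0 => /eqP ->; rewrite eq_s.
have [s mem_s] := IH (fun i le_in => finA i (leqW le_in)).
have [t eq_t] := finA n.+1 (leqnn _).
exists (s ++ t) => y; rewrite mem_cat; split.
  case/orP=> [/mem_s [i le_in Ai]|yt]; first by exists i => //; apply: leqW.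
  by exists n.+1; rewrite ?eq_t.
case=> i; rewrite leq_eqVlt => /orP[/eqP ->|le_in] Ai.
  by rewrite eq_t in Ai; rewrite Ai orbT.
by apply/orP; left; apply/mem_s; exists i.
Qed.

Lemma sub_image_ltn_setD1 (T : Type) (F : set T) (g : nat -> T) (n : nat) (f : T) :
  F `<=` g @` [set k | k < n.+1] -> F f ->
  exists g' : nat -> T, F `\` [set f] `<=` g' @` [set k | k < n].
Proof.
move=> Fg /Fg [j lt_jn <-].
exists (g \o bump j) => _ [/Fg [k lt_kn <-] neq_gk_gj].
have neq_kj : k != j by apply/eqP => eq_kj; apply: neq_gk_gj; rewrite eq_kj.
exists (unbump j k); last by rewrite /= unbumpK.
move: lt_jn lt_kn neq_kj; rewrite /= /unbump; case: (ltnP j k) => /=; lia.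
Qed.

Lemma fund_circuit_notin (T : eqType) (E : set T) (indep : set T -> Prop)
    (B : set T) (e x : T) (C : set T) :
  is_fund_circuit E indep B e C -> ~ B x -> x <> e -> ~ C x.
Proof. by move=> [_ sC] Bx' neq_xe /sC []. Qed.

Section FinitaryMatroid.

Variables (T : eqType) (E : set T) (indep : set T -> Prop).
Hypothesis matroid : finitary_matroid E indep.

Definition spans (I ys : seq T) : Prop :=
  forall y, y \in ys -> y \in I \/ ~ indep (y |` sset I).

Definition is_basis_of (ys I : seq T) : Prop :=
  [/\ uniq I, indep (sset I), {subset I <= ys} & spans I ys].

Lemma spanning_extension (ys I : seq T) : uniq I -> indep (sset I) ->
  exists J, [/\ uniq J, indep (sset J), {subset I <= J},
                {subset J <= I ++ ys} & spans J ys].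
Proof.
have [_ _ indep_down _ _] := matroid.
elim: ys I => [|y ys IH] I uI iI; first by exists I; split=> // z; rewrite cats0.
have [[yI' iyI]|not_ext] := EM (y \notin I /\ indep (y |` sset I)).
  have [||J [uJ iJ sIJ sJ spJ]] := IH (y :: I); rewrite ?sset_cons //=.
    by rewrite yI' uI.
  exists J; split=> //.
  - by move=> z zI; apply: sIJ; rewrite inE zI orbT.
  - by move=> z /sJ; rewrite !mem_cat !inE => /orP[/orP[]|] ->; rewrite ?orbT.
  move=> z; rewrite inE => /orP[/eqP->|]; last exact: spJ.
  by left; apply: sIJ; rewrite inE eqxx.
have [J [uJ iJ sIJ sJ spJ]] := IH I uI iI.
exists J; split=> //.
  by move=> z /sJ; rewrite !mem_cat inE => /orP[] ->; rewrite ?orbT.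
move=> z; rewrite inE => /orP[/eqP->|]; last exact: spJ.
have [yI|yI'] := boolP (y \in I); first by left; apply: sIJ.
right=> iyJ; apply: not_ext; split=> //; apply: indep_down iyJ _.
by move=> w [->|wI]; [left|right; apply: sIJ].
Qed.

Lemma basis_extension (ys I : seq T) : uniq I -> indep (sset I) ->
  {subset I <= ys} -> exists2 J, is_basis_of ys J & {subset I <= J}.
Proof.
move=> uI iI sIys; have [J [uJ iJ sIJ sJ spJ]] := spanning_extension ys uI iI.
exists J => //; split=> // z /sJ; rewrite mem_cat => /orP[/sIys|] //.
Qed.

Lemma basis_size_max (ys I K : seq T) : is_basis_of ys I ->
  uniq K -> indep (sset K) -> {subset K <= ys} -> size K <= size I.
Proof.
have [_ _ _ augment _] := matroid.
case=> uI iI _ spI uK iK sK; rewrite leqNgt; apply/negP => ltIK.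
have [y yK [yI' iyI]] := augment I K uI uK iI iK ltIK.
by case: (spI y (sK y yK)) => [yI|//]; rewrite yI in yI'.
Qed.

(* A basis [K] of [ys] containing [Z - x] cannot take [x]; since [|K| <= |I|],
   an independent [x + I] would augment [K] by an element of [I], which [K] spans. *)
Lemma basis_spans_circuit (ys I : seq T) (Z : set T) (x : T) :
  is_basis_of ys I -> is_circuit E indep Z -> Z x -> Z `<=` x |` sset ys ->
  x \in I \/ ~ indep (x |` sset I).
Proof.
have [_ _ indep_down augment _] := matroid.
move=> basI [_ depZ minZ] Zx sZ; have [uI iI sI spI] := basI.
have [xI|xI'] := boolP (x \in I); [by left|right => ixI].
pose zs := undup [seq y <- ys | `[< Z y >] && (y != x)].
have mem_zs y : y \in zs = (y \in ys) && `[< Z y >] && (y != x).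
  by rewrite mem_undup mem_filter andbC andbA.
have izs : indep (sset zs).
  apply: minZ => [y|eq_zs]; first by rewrite /sset /= mem_zs => /andP[/andP[_ /asboolP]].
  by have := Zx; rewrite -eq_zs /sset /= mem_zs eqxx andbF.
have zs_ys : {subset zs <= ys} by move=> y; rewrite mem_zs => /andP[/andP[]].
have [K [uK iK sK spK] szK] := basis_extension (undup_uniq _) izs zs_ys.
have depxK : ~ indep (x |` sset K).
  move=> ixK; apply: depZ; apply: indep_down ixK _ => y Zy.
  have [->|neq_yx] := eqVneq y x; [by left|right].
  have [eq_yx|yys] := sZ y Zy; first by rewrite eq_yx eqxx in neq_yx.
  by apply: szK; rewrite mem_zs yys neq_yx andbT; apply/asboolP.
have [||||y yxI [yK' iyK]] := augment K (x :: I) uK.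
- by rewrite /= xI' uI.
- exact: iK.
- by rewrite sset_cons.
- by rewrite ltnS (basis_size_max basI).
move: yxI; rewrite inE => /orP[/eqP eq_yx|yI]; first by apply: depxK; rewrite -eq_yx.
by case: (spK y (sI y yI)) => [yK|//]; rewrite yK in yK'.
Qed.

Lemma dependent_contains_circuit (s : seq T) : sset s `<=` E -> ~ indep (sset s) ->
  exists2 C, is_circuit E indep C & C `<=` sset s.
Proof.
elim: {s}(size s) {-2}s (leqnn (size s)) => [|m IH] s.
  case: s => // _ _; rewrite sset_nil => dep0.
  by case: dep0; have [] := matroid.
move=> size_s sE dep_s.
have [[D [sD neq_D dep_D]]|minimal] :=
  EM (exists D, [/\ D `<=` sset s, D <> sset s & ~ indep D]); last first.
  exists (sset s) => //; split=> // D sD neq_D.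
  by apply: contrapT => dep_D; apply: minimal; exists D.
have [y ys Dy'] : exists2 y, y \in s & ~ D y.
  apply: contrapT => none; apply: neq_D; apply/seteqP; split=> // y ys.
  by apply: contrapT => Dy'; apply: none; exists y.
pose t := [seq z <- s | `[< D z >]].
have eq_tD : sset t = D.
  apply/seteqP; split=> z; rewrite /sset /= mem_filter; first by case/andP=> /asboolP.
  by move=> Dz; rewrite (sD z Dz) andbT; apply/asboolP.
have size_t : size t < size s.
  rewrite size_filter -(count_predC (fun z => `[< D z >])) -{1}[count _ s]addn0.
  by rewrite ltn_add2l -has_count; apply/hasP; exists y => //=; apply/asboolP.
have [|||C cC sC] := IH t; rewrite ?eq_tD //.
- by rewrite -ltnS (leq_trans size_t).
- by move=> z /sD /sE.
by exists C => // z /sC; rewrite eq_tD => /sD.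
Qed.

Lemma circuit_finite (C : set T) : is_circuit E indep C -> exists s, C = sset s.
Proof.
have [_ _ _ _ finite_char] := matroid; case=> _ dep_C minC.
have [s sC dep_s] : exists2 s, sset s `<=` C & ~ indep (sset s).
  apply: contrapT => none; apply: dep_C; apply: finite_char => s sC.
  by apply: contrapT => dep_s; apply: none; exists s.
exists s; apply: contrapT => neq_Cs; apply: dep_s; apply: minC => // eq_sC.
exact: neq_Cs.
Qed.

Lemma fund_circuit_mem (B : set T) (e : T) (C : set T) :
  indep B -> ~ B e -> is_fund_circuit E indep B e C -> C e.
Proof.
have [_ _ indep_down _ _] := matroid.
move=> iB Be' [[_ dep_C _] sC]; apply: contrapT => Ce'; apply: dep_C.
by apply: indep_down iB _ => y Cy; case: (sC y Cy) => // eq_ye; rewrite eq_ye in Cy.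
Qed.

(* A basis [I] of the elements of [U] outside [A + x] spans [A], hence all of
   [U - x] and so [x]; the circuit inside [x + I] avoids [A]. *)
Lemma circuit_avoiding (U : seq T) (A : set T) (x : T) (Z : set T) :
  is_circuit E indep Z -> Z x -> Z `<=` sset U -> ~ A x ->
  (forall a, A a -> a \in U -> exists Y, [/\ is_circuit E indep Y, Y a &
     Y `<=` a |` [set y | y \in U /\ ~ A y /\ y <> x]]) ->
  exists C, [/\ is_circuit E indep C, C x & C `<=` sset U `\` A].
Proof.
have [indep_sub indep0 indep_down _ _] := matroid.
move=> cZ Zx sZU Ax' spannedA; have [ZE _ _] := cZ.
pose xs := [seq y <- U | `[< ~ A y /\ y <> x >]].
have mem_xs y : y \in xs <-> [/\ y \in U, ~ A y & y <> x].
  rewrite mem_filter; split=> [/andP[/asboolP[Ay' neq_yx] yU] // | [-> Ay' neq_yx]].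
  by rewrite andbT; apply/asboolP.
have indep_nil : indep (sset [::]) by rewrite sset_nil.
have nil_sub : {subset [::] <= xs} by [].
have [I basI_xs _] := basis_extension (isT : uniq [::]) indep_nil nil_sub.
have [uI iI sI spI] := basI_xs.
pose ys := [seq y <- U | y != x].
have basI : is_basis_of ys I.
  split=> // [y /sI /mem_xs[yU _ /eqP neq_yx]|y]; first by rewrite mem_filter neq_yx.
  rewrite mem_filter => /andP[/eqP neq_yx yU]; have [Ay|Ay'] := EM (A y).
    have [Y [cY Yy sY]] := spannedA y Ay yU; apply: basis_spans_circuit basI_xs cY Yy _.
    by move=> z /sY [->|[zU [Az' neq_zx]]]; [left|right; apply/mem_xs].
  by apply: spI; apply/mem_xs.
have sZ : Z `<=` x |` sset ys.
  move=> y Zy; have [->|neq_yx] := eqVneq y x; [by left|right].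
  by rewrite /sset /= mem_filter neq_yx; apply: sZU.
have dep_xI : ~ indep (x |` sset I).
  have [xI|//] := basis_spans_circuit basI cZ Zx sZ.
  by have /mem_xs[] := sI x xI.
have [||C cC sC] := dependent_contains_circuit (s := x :: I); rewrite ?sset_cons.
- by move=> y [->|yI]; [apply: ZE | apply: indep_sub yI].
- exact: dep_xI.
rewrite sset_cons in sC.
exists C; split=> //.
  have [_ dep_C _] := cC; apply: contrapT => Cx'; apply: dep_C; apply: indep_down iI _.
  by move=> y Cy; case: (sC y Cy) => // eq_yx; rewrite eq_yx in Cy.
by move=> y /sC [->|/sI /mem_xs[yU Ay' _]] //; split=> //; apply: sZU.
Qed.

Lemma fund_circuit_avoiding (B F : set T) (n : nat) (e : nat -> T) (Cf : nat -> set T) :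
  indep B -> ~ B (e 0) -> F `<=` B ->
  (forall i, i <= n -> is_fund_circuit E indep B (e i) (Cf i)) ->
  (forall f, F f -> exists Y, [/\ is_circuit E indep Y, Y f &
     Y `<=` f |` [set y | (exists2 i, i <= n & Cf i y) /\ ~ F y /\ y <> e 0]]) ->
  exists C, [/\ is_circuit E indep C, C (e 0) &
    C `<=` [set x | exists2 i, 0 <= i <= n & Cf i x] `\` F].
Proof.
move=> iB Be0' FB fund spannedF.
have [U memU] := sset_bigcup (fun i le_in => circuit_finite (fund i le_in).1).
have fund0 := fund 0 (leq0n n).
have [|||C [cC Ce0 sC]] :=
  circuit_avoiding (U := U) (A := F) fund0.1 (fund_circuit_mem iB Be0' fund0).
- by move=> y Cy; apply/memU; exists 0.
- by move/FB.
- move=> f Ff _; have [Y [cY Yf sY]] := spannedF f Ff; exists Y; split=> //.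
  by move=> y /sY [->|[/memU yU yrest]]; [left|right].
by exists C; split=> // y /sC [/memU [i le_in Ciy] Fy']; split=> //; exists i.
Qed.

End FinitaryMatroid.

Theorem lemma3p3 (T : eqType) (E : set T) (indep : set T -> Prop)
  (B : set T) (n : nat) (e : nat -> T) (Cf : nat -> set T) (F : set T) :
  finitary_matroid E indep ->
  is_base indep B ->
  (forall i, i <= n -> E (e i) /\ ~ B (e i)) ->
  (forall i j, i <= n -> j <= n -> i <> j -> e i <> e j) ->
  (forall i, i <= n -> is_fund_circuit E indep B (e i) (Cf i)) ->
  F `<=` B ->
  (exists f : nat -> T, F `<=` f @` [set k | k < n]) ->
  exists2 istar, istar <= n &
    exists C : set T, [/\ is_circuit E indep C, C (e istar) &
      C `<=` [set x | exists2 i, istar <= i <= n & Cf i x] `\` F].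
Proof.
move=> M [iB _]; elim: n e Cf F => [|n IH] e Cf F He He_inj fund FB; case=> g Fg.
  exists 0 => //; apply: (fund_circuit_avoiding M iB) => //; first by case: (He 0 isT).
  by move=> f /Fg [].
apply: contrapT => no_istar; apply: (no_istar); exists 0 => //.
apply: (fund_circuit_avoiding M iB) => //; first by case: (He 0 isT).
move=> f Ff; have [g' Fg'] := sub_image_ltn_setD1 Fg Ff.
have [||||| i le_in [C [cC Ce sC]]] := IH (fun i => e i.+1) (fun i => Cf i.+1) (F `\` [set f]).
- by move=> i; apply: (He i.+1).
- by move=> i j le_in le_jn neq_ij; apply: He_inj => // -[/neq_ij].
- by move=> i; apply: (fund i.+1).
- by move=> ? [/FB].
- by exists g'.
have [fC|fC'] := EM (C f); last first.
  exfalso; apply: (no_istar); exists i.+1 => //; exists C; split=> // y Cy.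
  have [[k le_k Cky] Fy'] := sC y Cy; split=> [|Fy]; first by exists k.+1.
  by apply: Fy'; split=> // eq_yf; apply: fC'; rewrite -eq_yf.
exists C; split=> // y Cy; have [->|neq_yf] := eqVneq y f; [by left|right].
have [[k /andP[_ le_kn] Cky] Fy'] := sC y Cy.
split; first by exists k.+1.
split=> [Fy|eq_ye0]; first by apply: Fy'; split=> // /eqP; rewrite (negbTE neq_yf).
have [_ Be0'] := He 0 isT.
have neq_e0 : e 0 <> e k.+1 by apply: He_inj.
by apply: fund_circuit_notin (fund k.+1 le_kn) _ _ Cky; rewrite eq_ye0.
Qed.
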